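(* Consider any sequences $\{(x_k,y_k,\gamma_k)\}_{k\ge0}$, $\{(\tilde x_k,u_k,\tilde\gamma_k)\}_{k\ge1}$ generated by the inexact symmetric proximal ADMM described in the context, and let $z_k=(x_k,y_k,\gamma_k)$ ($k\ge0$), $\tilde z_k=(\tilde x_k,y_k,\tilde\gamma_k)$ and $q_k=-\beta(A\tilde x_k+By_k-b)$ ($k\ge1$). Let $\sigma\in[\hat\sigma,1)$ be a scalar with $\varphi(\sigma)\ge0$, $\widehat\varphi(\sigma)\ge0$, $\widetilde\varphi(\sigma)>0$, $\overline\varphi(\sigma)\ge0$ (such $\sigma$ exists). Define $$\eta_0=\frac{4(1+\tau+\vartheta)\varphi(\sigma)}{(\tau+\theta)(1+\tau)\vartheta}d_0,\qquad \eta_k=\frac{\widetilde\varphi(\sigma)}{(\tau+\theta)\beta}\|q_k\|^2+\frac{\varphi(\sigma)}{(\tau+\theta)(1+\tau)}\|y_k-y_{k-1}\|_H^2\quad(k\ge1).$$ Then for every $k\ge1$, $$\|\tilde z_k-z_k\|_M^2+\eta_k\le\sigma\|\tilde z_k-z_{k-1}\|_M^2+\eta_{k-1}.$$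
   Context: Let $f:\mathbb{R}^n\to(-\infty,\infty]$ and $g:\mathbb{R}^p\to(-\infty,\infty]$ be proper closed convex functions, $A\in\mathbb{R}^{m\times n}$, $B\in\mathbb{R}^{m\times p}$, $b\in\mathbb{R}^m$ (problem: $\min\{f(x)+g(y):Ax+By=b\}$). Standing assumption: there exists $(x^*,y^*,\gamma^* )$ solving the Lagrangian system $0\in\partial f(x)-A^*\gamma$, $0\in\partial g(y)-B^*\gamma$, $0=Ax+By-b$. Here $\partial$ is the subdifferential, $A^*$ the transpose, $\mathbb{S}^n_{++}$ ($\mathbb{S}^p_+$) the symmetric positive definite (semidefinite) matrices, and $\|z\|_Q=\sqrt{\langle Qz,z\rangle}$ for $Q$ positive semidefinite. Algorithm (inexact symmetric proximal ADMM): given $(x_0,y_0,\gamma_0)\in\mathbb{R}^n\times\mathbb{R}^p\times\mathbb{R}^m$, $\beta>0$, $\tilde\sigma,\hat\sigma\in[0,1)$, $G\in\mathbb{S}^n_{++}$, $H\in\mathbb{S}^p_+$, and $(\tau,\theta)\in\mathcal R_{\tilde\sigma}:=\{(\tau,\theta):\tau\in(-1,1-\tilde\sigma),\ \tau+\theta>0,\ (1-\tau^2)(2-\tau-\theta-\tilde\sigma)-(1-\theta)^2(1-\tau-\tilde\sigma)>0\}$. For $k=1,2,\dots$: compute $(\tilde x_k,u_k)$ with $u_k\in\partial f(\tilde x_k)-A^*\tilde\gamma_k$ and $\|\tilde x_k-x_{k-1}+G^{-1}u_k\|_G^2\le\frac{\tilde\sigma}{\beta}\|\tilde\gamma_k-\gamma_{k-1}\|^2+\hat\sigma\|\tilde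 x_k-x_{k-1}\|_G^2$, where $\tilde\gamma_k=\gamma_{k-1}-\beta(A\tilde x_k+By_{k-1}-b)$; set $\gamma_{k-1/2}=\gamma_{k-1}-\tau\beta(A\tilde x_k+By_{k-1}-b)$; let $y_k$ be an optimal solution of $\min_y\{g(y)-\langle\gamma_{k-1/2},By\rangle+\frac\beta2\|A\tilde x_k+By-b\|^2+\frac12\|y-y_{k-1}\|_H^2\}$; set $x_k=x_{k-1}-G^{-1}u_k$ and $\gamma_k=\gamma_{k-1/2}-\theta\beta(A\tilde x_k+By_k-b)$. Definitions: $T(x,y,\gamma)=(\partial f(x)-A^*\gamma,\ \partial g(y)-B^*\gamma,\ Ax+By-b)$; $M=\begin{bmatrix}G&0&0\\0&H+\frac{(\tau-\tau\theta+\theta)\beta}{\tau+\theta}B^*B&-\frac{\tau}{\tau+\theta}B^*\\0&-\frac{\tau}{\tau+\theta}B&\frac{1}{(\tau+\theta)\beta}I\end{bmatrix}$; $d_0=\inf\{\|z^*-z_0\|_M^2: z^*\in T^{-1}(0)\}$; $\vartheta=\sqrt{(3-3\tau-2\tilde\sigma)(4-\tau-\theta-2\tilde\sigma)}-2(1-\tau-\tilde\sigma)$; and for $\sigma\in\mathbb{R}$: $\varphi(\sigma)=(1-\tau)(\sigma-1)+(1-\tau-\tilde\sigma)(\tau+\theta)$, $\widehat\varphi(\sigma)=(1-\tau)[(1+\theta)\sigma-1+\tau]-\tilde\sigma(\tau+\theta)$, $\widetilde\varphi(\sigma)=\sigma-(1-\tau-\theta)^2-\tilde\sigma(\tau+\theta)$,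 $\overline\varphi(\sigma)=[(1+\tau)\widehat\varphi(\sigma)-2\tau\varphi(\sigma)](1+\tau)\widetilde\varphi(\sigma)-(1-\theta)^2\varphi(\sigma)^2$. *)

From HB Require Import structures.
From mathcomp Require Import all_boot all_order all_algebra.
From mathcomp Require Import all_classical all_reals all_analysis.
Set Implicit Arguments. Unset Strict Implicit. Unset Printing Implicit Defensive.
Import Order.TTheory GRing.Theory Num.Theory.
Import numFieldNormedType.Exports.
Local Open Scope ring_scope.
Local Open Scope classical_set_scope.

Section Defs.
Variable R : realType.

Definition dotv (k : nat) (a b : 'cV[R]_k) : R := (a^T *m b) 0 0.
Definition sqn (k : nat) (a : 'cV[R]_k) : R := dotv a a.
Definition qnorm2 (k : nat) (Q : 'M[R]_k) (v : 'cV[R]_k) : R := dotv (Q *m v) v.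

Definition posdef (k : nat) (Q : 'M[R]_k) : Prop :=
  Q^T = Q /\ forall v : 'cV[R]_k, v != 0 -> 0 < qnorm2 Q v.
Definition psd (k : nat) (Q : 'M[R]_k) : Prop :=
  Q^T = Q /\ forall v : 'cV[R]_k, 0 <= qnorm2 Q v.

(* Functions R^k -> (-oo, +oo] are modelled as maps into \bar R never equal to -oo. *)
Definition proper_fun (k : nat) (h : 'cV[R]_k -> \bar R) : Prop :=
  (forall v, h v != -oo%E) /\ exists v, h v \is a fin_num.
Definition convex_fun (k : nat) (h : 'cV[R]_k -> \bar R) : Prop :=
  forall (v w : 'cV[R]_k) (t : R), 0 < t < 1 ->
    let c := (t *: v + (1 - t) *: w)%R in (h c <= t%:E * h v + (1 - t)%:E * h w)%E.
(* closed = epigraph closed (sequentially; equivalent in finite dimension) *)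
Definition closed_fun (k : nat) (h : 'cV[R]_k -> \bar R) : Prop :=
  forall (v : nat -> 'cV[R]_k) (a : nat -> R) (v0 : 'cV[R]_k) (a0 : R),
    (forall i j, (fun l => v l i j) @ \oo --> (v0 i j : R)) ->
    a @ \oo --> (a0 : R) ->
    (forall l, (h (v l) <= (a l)%:E)%E) ->
    (h v0 <= a0%:E)%E.

Definition subdiff (k : nat) (h : 'cV[R]_k -> \bar R) (v u : 'cV[R]_k) : Prop :=
  h v \is a fin_num /\ forall w, (h v + (dotv u (w - v))%:E <= h w)%E.

(* 0 \in T(x,y,gam), i.e. (x,y,gam) solves the Lagrangian system *)
Definition lagr_sol (n p m : nat) (f : 'cV[R]_n -> \bar R) (g : 'cV[R]_p -> \bar R)
  (A : 'M[R]_(m, n)) (B : 'M[R]_(m, p)) (b : 'cV[R]_m)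
  (x : 'cV[R]_n) (y : 'cV[R]_p) (gam : 'cV[R]_m) : Prop :=
  subdiff f x (A^T *m gam) /\ subdiff g y (B^T *m gam) /\ A *m x + B *m y - b = 0.

Definition param_region (sigt tau theta : R) : Prop :=
  -1 < tau < 1 - sigt /\ 0 < tau + theta /\
  0 < (1 - tau ^+ 2) * (2 - tau - theta - sigt) - (1 - theta) ^+ 2 * (1 - tau - sigt).

Definition zvec (n p m : nat) (x : 'cV[R]_n) (y : 'cV[R]_p) (gam : 'cV[R]_m)
  : 'cV[R]_(n + p + m) := col_mx (col_mx x y) gam.

Definition Mmat (n p m : nat) (B : 'M[R]_(m, p)) (G : 'M[R]_n) (H : 'M[R]_p)
  (beta tau theta : R) : 'M[R]_(n + p + m) :=
  block_mx
    (block_mx G 0 0 (H + ((tau - tau * theta + theta) * beta / (tau + theta)) *: (B^T *m B)))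
    (col_mx (0 : 'M[R]_(n, m)) (- (tau / (tau + theta)) *: B^T))
    (row_mx (0 : 'M[R]_(m, n)) (- (tau / (tau + theta)) *: B))
    ((1 / ((tau + theta) * beta)) *: 1%:M).

Definition dist0 (n p m : nat) (f : 'cV[R]_n -> \bar R) (g : 'cV[R]_p -> \bar R)
  (A : 'M[R]_(m, n)) (B : 'M[R]_(m, p)) (b : 'cV[R]_m) (G : 'M[R]_n) (H : 'M[R]_p)
  (beta tau theta : R) (z0 : 'cV[R]_(n + p + m)) : R :=
  inf [set d | exists xs ys gs, lagr_sol f g A B b xs ys gs /\
               d = qnorm2 (Mmat B G H beta tau theta) (zvec xs ys gs - z0)].

Definition vartheta (sigt tau theta : R) : R :=
  Num.sqrt ((3 - 3 * tau - 2 * sigt) * (4 - tau - theta - 2 * sigt)) - 2 * (1 - tau - sigt).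
Definition phi (sigt tau theta s : R) : R :=
  (1 - tau) * (s - 1) + (1 - tau - sigt) * (tau + theta).
Definition phihat (sigt tau theta s : R) : R :=
  (1 - tau) * ((1 + theta) * s - 1 + tau) - sigt * (tau + theta).
Definition phitilde (sigt tau theta s : R) : R :=
  s - (1 - tau - theta) ^+ 2 - sigt * (tau + theta).
Definition phibar (sigt tau theta s : R) : R :=
  ((1 + tau) * phihat sigt tau theta s - 2 * tau * phi sigt tau theta s)
    * (1 + tau) * phitilde sigt tau theta s
  - (1 - theta) ^+ 2 * (phi sigt tau theta s) ^+ 2.

(* The iterates (indices k >= 1 for xt, u, gt, gh = gamma_{k-1/2}) are generated
   by the inexact symmetric proximal ADMM. *)
Definition isp_admm (n p m : nat) (f : 'cV[R]_n -> \bar R) (g : 'cV[R]_p -> \bar R)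
  (A : 'M[R]_(m, n)) (B : 'M[R]_(m, p)) (b : 'cV[R]_m)
  (beta sigt sigh tau theta : R) (G : 'M[R]_n) (H : 'M[R]_p)
  (x : nat -> 'cV[R]_n) (y : nat -> 'cV[R]_p) (gam : nat -> 'cV[R]_m)
  (xt : nat -> 'cV[R]_n) (u : nat -> 'cV[R]_n) (gt : nat -> 'cV[R]_m)
  (gh : nat -> 'cV[R]_m) : Prop :=
  forall k : nat, (1 <= k)%N ->
  [/\ gt k = gam k.-1 - beta *: (A *m xt k + B *m y k.-1 - b),
      subdiff f (xt k) (u k + A^T *m gt k),
      qnorm2 G (xt k - x k.-1 + invmx G *m u k)
        <= sigt / beta * sqn (gt k - gam k.-1) + sigh * qnorm2 G (xt k - x k.-1),
      gh k = gam k.-1 - (tau * beta) *: (A *m xt k + B *m y k.-1 - b) &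
   [/\ (forall yy : 'cV[R]_p,
         (g (y k) + (- dotv (gh k) (B *m y k)
                     + beta / 2 * sqn (A *m xt k + B *m y k - b)
                     + 1 / 2 * qnorm2 H (y k - y k.-1))%:E
          <= g yy + (- dotv (gh k) (B *m yy)
                     + beta / 2 * sqn (A *m xt k + B *m yy - b)
                     + 1 / 2 * qnorm2 H (yy - y k.-1))%:E)%E),
      x k = x k.-1 - invmx G *m u k
    & gam k = gh k - (theta * beta) *: (A *m xt k + B *m y k - b)]].

End Defs.

From HB Require Import structures.
From mathcomp Require Import all_boot all_order all_algebra.
From mathcomp Require Import all_classical all_reals all_analysis.
From mathcomp Require Import ring lra.
Set Implicit Arguments. Unset Strict Implicit. Unset Printing Implicit Defensive.
Import Order.TTheory GRing.Theory Num.Theory.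
Local Open Scope ring_scope.

Ltac colvec_ring := apply/matrixP => i j; rewrite !mxE; ring.

(* Write w_k = beta B (y_k - y_(k-1)).  Since gt_k - gam_(k-1) = q_k + w_k and
   gt_k - gam_k = (1 - tau - theta) q_k + (1 - tau) w_k, both M-norms are explicit in
   the G-norms of the x-errors, ||y_k - y_(k-1)||_H^2 and the Gram entries of q_k, w_k;
   the x-error is controlled by the inexact criterion.  The y-step is a proximal step,
   so B^T (gam_(k-1/2) + q_k) - H (y_k - y_(k-1)) is a subgradient of g at y_k.  For
   k >= 2, monotonicity of the subdifferential of g at y_(k-1) and y_k and
   Cauchy-Schwarz for H control the mixed term <q_k, w_k>; what is left is a quadratic
   form in (q_(k-1), w_k) that the sign conditions on phi, phitilde and phibar make
   nonnegative.  For k = 1, monotonicity of both subdifferentials against a solution z*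
   and the three-point identity for G give
   beta ||y_1 - y_0||_H^2 - 2 (1 + tau) <q_1, w_1> <= 4 kappa beta ||z* - z_0||_M^2
   with kappa = (1 + tau + vartheta) / vartheta; the identity
   (vartheta + 2 (1 - tau - sigt))^2 = (3 - 3 tau - 2 sigt) (4 - tau - theta - 2 sigt)
   is what makes the leftover quadratic form nonnegative, and the infimum over z*
   gives eta_0.  In each case the gap between the two sides is an explicit
   nonnegative combination of these slacks. *)

Section InnerProduct.
Context {R : realType}.
Implicit Types (k l : nat).

Lemma dotvE k (a c : 'cV[R]_k) : dotv a c = \sum_i a i 0 * c i 0.
Proof. by rewrite /dotv !mxE; apply: eq_bigr => i _; rewrite !mxE. Qed.

Lemma dotvC k (a c : 'cV[R]_k) : dotv a c = dotv c a.
Proof. by rewrite !dotvE; apply: eq_bigr => i _; rewrite mulrC. Qed.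

Lemma dotvDl k (a a' c : 'cV[R]_k) : dotv (a + a') c = dotv a c + dotv a' c.
Proof. by rewrite /dotv linearD/= mulmxDl mxE. Qed.

Lemma dotvZl k t (a c : 'cV[R]_k) : dotv (t *: a) c = t * dotv a c.
Proof. by rewrite /dotv linearZ/= -scalemxAl mxE. Qed.

Lemma dotvNl k (a c : 'cV[R]_k) : dotv (- a) c = - dotv a c.
Proof. by rewrite -scaleN1r dotvZl mulN1r. Qed.

Lemma dotvBl k (a a' c : 'cV[R]_k) : dotv (a - a') c = dotv a c - dotv a' c.
Proof. by rewrite dotvDl dotvNl. Qed.

Lemma dotvDr k (a c c' : 'cV[R]_k) : dotv a (c + c') = dotv a c + dotv a c'.
Proof. by rewrite dotvC dotvDl !(dotvC a). Qed.

Lemma dotvZr k t (a c : 'cV[R]_k) : dotv a (t *: c) = t * dotv a c.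
Proof. by rewrite dotvC dotvZl dotvC. Qed.

Lemma dotvNr k (a c : 'cV[R]_k) : dotv a (- c) = - dotv a c.
Proof. by rewrite dotvC dotvNl dotvC. Qed.

Lemma dotvBr k (a c c' : 'cV[R]_k) : dotv a (c - c') = dotv a c - dotv a c'.
Proof. by rewrite dotvDr dotvNr. Qed.

Lemma dotv0l k (c : 'cV[R]_k) : dotv 0 c = 0.
Proof. by rewrite /dotv trmx0 mul0mx mxE. Qed.

Lemma dotv_mulmxl k l (Q : 'M[R]_(l, k)) (a : 'cV[R]_k) (c : 'cV[R]_l) :
  dotv (Q *m a) c = dotv a (Q^T *m c).
Proof. by rewrite /dotv trmx_mul mulmxA. Qed.

Lemma dotv_trmxl k l (Q : 'M[R]_(l, k)) (c : 'cV[R]_l) (a : 'cV[R]_k) :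
  dotv (Q^T *m c) a = dotv c (Q *m a).
Proof. by rewrite dotv_mulmxl trmxK. Qed.

Lemma dotv_col_mx k l (a c : 'cV[R]_k) (a' c' : 'cV[R]_l) :
  dotv (col_mx a a') (col_mx c c') = dotv a c + dotv a' c'.
Proof. by rewrite /dotv tr_col_mx mul_row_col mxE. Qed.

Lemma sqn_ge0 k (a : 'cV[R]_k) : 0 <= sqn a.
Proof. by rewrite /sqn dotvE; apply: sumr_ge0 => i _; rewrite -expr2 sqr_ge0. Qed.

Lemma sqnN k (a : 'cV[R]_k) : sqn (- a) = sqn a.
Proof. by rewrite /sqn dotvNl dotvNr opprK. Qed.

Lemma sqnZ k t (a : 'cV[R]_k) : sqn (t *: a) = t ^+ 2 * sqn a.
Proof. by rewrite /sqn dotvZl dotvZr mulrA. Qed.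

Lemma sqnD k (a c : 'cV[R]_k) : sqn (a + c) = sqn a + 2 * dotv a c + sqn c.
Proof. rewrite /sqn !dotvDl !dotvDr (dotvC c a); ring. Qed.

Lemma sqn_lincomb k s t (a c : 'cV[R]_k) :
  sqn (s *: a + t *: c) = s ^+ 2 * sqn a + 2 * s * t * dotv a c + t ^+ 2 * sqn c.
Proof. rewrite sqnD !sqnZ dotvZl dotvZr; ring. Qed.

Lemma sqn_lincomb3 k s t (a c d : 'cV[R]_k) :
  sqn (a + s *: c + t *: d) = sqn a + s ^+ 2 * sqn c + t ^+ 2 * sqn d
    + 2 * s * dotv a c + 2 * t * dotv a d + 2 * s * t * dotv c d.
Proof. by rewrite !sqnD !sqnZ !dotvDl !dotvZl !dotvZr; ring. Qed.

Lemma qnorm2N k (Q : 'M[R]_k) a : qnorm2 Q (- a) = qnorm2 Q a.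
Proof. by rewrite /qnorm2 mulmxN dotvNl dotvNr opprK. Qed.

Lemma qnorm20 k (Q : 'M[R]_k) : qnorm2 Q 0 = 0.
Proof. by rewrite /qnorm2 mulmx0 dotv0l. Qed.

Section Symmetric.
Variables (k : nat) (Q : 'M[R]_k).
Hypothesis symQ : Q^T = Q.

Lemma dotv_sym a c : dotv (Q *m a) c = dotv (Q *m c) a.
Proof. by rewrite dotv_mulmxl symQ dotvC. Qed.

Lemma qnorm2_lincomb a c t :
  qnorm2 Q (a + t *: c) = qnorm2 Q a + 2 * t * dotv (Q *m a) c + t ^+ 2 * qnorm2 Q c.
Proof.
rewrite /qnorm2 mulmxDr -scalemxAr !dotvDl !dotvDr !dotvZl !dotvZr (dotv_sym c a).
ring.
Qed.

Lemma qnorm2_three_point a c e :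
  2 * dotv (Q *m (a - c)) e =
  qnorm2 Q (e - c) - qnorm2 Q (e - a) + qnorm2 Q a - qnorm2 Q c.
Proof.
rewrite /qnorm2 !mulmxBr !dotvBl !dotvBr (dotv_sym c e) (dotv_sym a e); ring.
Qed.

End Symmetric.

Lemma psd_dotv_le k (Q : 'M[R]_k) a c : psd Q ->
  2 * dotv (Q *m a) c <= qnorm2 Q a + qnorm2 Q c.
Proof.
move=> [symQ Q_ge0]; have := Q_ge0 (a - c).
by rewrite /qnorm2 mulmxBr !dotvBl !dotvBr (dotv_sym symQ c a); lra.
Qed.

Lemma posdef_psd k (Q : 'M[R]_k) : posdef Q -> psd Q.
Proof.
move=> [symQ Q_gt0]; split=> // a; have [->|a0] := eqVneq a 0.
  by rewrite qnorm20.
exact/ltW/Q_gt0.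
Qed.

Lemma posdef_unitmx k (Q : 'M[R]_k) : posdef Q -> Q \in unitmx.
Proof.
move=> [symQ Q_gt0]; rewrite unitmxE unitfE; apply/negP => /det0P [a a0 aQ].
have aT0 : a^T != 0 by apply: contra a0 => /eqP aT0; rewrite -[a]trmxK aT0 trmx0.
have := Q_gt0 _ aT0.
by rewrite /qnorm2 -{1}symQ -trmx_mul aQ trmx0 dotv0l ltxx.
Qed.

End InnerProduct.

Section Subdifferential.
Context {R : realType} {k : nat}.
Implicit Types (h : 'cV[R]_k -> \bar R) (a c v w : 'cV[R]_k).

Lemma subdiff_monotone h a c v w :
  subdiff h a v -> subdiff h c w -> 0 <= dotv (v - w) (a - c).
Proof.
move=> [ha hav] [hc hcw]; have := hav c; have := hcw a.
rewrite -(fineK ha) -(fineK hc) -!EFinD !lee_fin.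
by rewrite dotvBl -(opprB a c) dotvNr; lra.
Qed.

Lemma le_of_forall_small (a b e : R) : 0 <= e ->
  (forall t, 0 < t -> t < 1 -> a <= b + t * e) -> a <= b.
Proof.
move=> e0 le_abe; apply/ler_addgt0Pr => r r0.
have r_e_gt0 : 0 < r + e + 1 by lra.
pose t := r / (r + e + 1).
have t0 : 0 < t by rewrite divr_gt0.
have t1 : t < 1 by rewrite ltr_pdivrMr // mul1r; lra.
have te : t * e <= r by rewrite mulrAC ler_pdivrMr //; nra.
by have := le_abe t t0 t1; lra.
Qed.

Lemma subdiff_of_min_quadratic h (P S : 'cV[R]_k -> R) v y0 :
  proper_fun h -> convex_fun h -> (forall d, 0 <= S d) ->
  (forall d t, P (y0 + t *: d) = P y0 - t * dotv v d + t ^+ 2 * S d) ->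
  (forall w, (h y0 + (P y0)%:E <= h w + (P w)%:E)%E) ->
  subdiff h y0 v.
Proof.
move=> [h_ninfty [w0 hw0]] h_convex S_ge0 P_taylor y0_min.
have hy0 : h y0 \is a fin_num.
  rewrite fin_numE h_ninfty /=; apply/negP => /eqP hy0.
  by have := y0_min w0; rewrite hy0 -(fineK hw0) -EFinD.
split=> // w; case hw: (h w) => [r| |]; [|by rewrite leey|by have := h_ninfty w; rewrite hw].
rewrite -(fineK hy0) -EFinD lee_fin.
set d := w - y0.
apply: (le_of_forall_small (S_ge0 d)) => t t0 t1.
have yt : t *: w + (1 - t) *: y0 = y0 + t *: d by colvec_ring.
have := h_convex w y0 t; rewrite t0 t1 /= yt hw -(fineK hy0) -!EFinM -EFinD => conv.
have := le_trans (y0_min (y0 + t *: d)) (leeD2r _ (conv isT)).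
rewrite P_taylor -(fineK hy0) -!EFinD lee_fin => le_t.
suff : t * (fine (h y0) + dotv v d - (r + t * S d)) <= 0 by rewrite pmulr_rle0 //; lra.
by rewrite -subr_ge0; move: le_t; rewrite -subr_ge0; congr (0 <= _); ring.
Qed.

End Subdifferential.

Lemma prox_subproblem_subdiff {R : realType} {p m : nat} (g : 'cV[R]_p -> \bar R)
    (B : 'M[R]_(m, p)) (H : 'M[R]_p) (beta : R) (c a b : 'cV[R]_m) (y0 y' : 'cV[R]_p) :
  proper_fun g -> convex_fun g -> psd H -> 0 <= beta ->
  (forall yy, (g y0 + (- dotv c (B *m y0) + beta / 2 * sqn (a + B *m y0 - b)
                       + 1 / 2 * qnorm2 H (y0 - y'))%:E
       <= g yy + (- dotv c (B *m yy) + beta / 2 * sqn (a + B *m yy - b)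
                       + 1 / 2 * qnorm2 H (yy - y'))%:E)%E) ->
  subdiff g y0 (B^T *m (c - beta *: (a + B *m y0 - b)) - H *m (y0 - y')).
Proof.
move=> g_proper g_convex [symH H_ge0] beta0.
apply: (subdiff_of_min_quadratic (S := fun d => beta / 2 * sqn (B *m d) + 1 / 2 * qnorm2 H d))
  => // [d | d t].
  by apply: addr_ge0; apply: mulr_ge0; rewrite ?sqn_ge0 ?H_ge0 //; lra.
have -> : a + B *m (y0 + t *: d) - b = (a + B *m y0 - b) + t *: (B *m d).
  by rewrite mulmxDr -scalemxAr; colvec_ring.
have -> : y0 + t *: d - y' = (y0 - y') + t *: d by colvec_ring.
rewrite qnorm2_lincomb // sqnD sqnZ mulmxDr -scalemxAr.
rewrite !dotvDr !dotvZr (dotvBl (B^T *m _)) dotv_trmxl (dotvBl c) dotvZl.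
by field.
Qed.

Section ParameterRegion.
Context {R : realType}.
Variables (sigt tau theta : R).
Hypotheses (hsigt : 0 <= sigt < 1) (hreg : param_region sigt tau theta).

Let kappa := (1 + tau + vartheta sigt tau theta) / vartheta sigt tau theta.

Lemma region_tau_lt1 : tau < 1.
Proof. by case: hreg => /andP[_ ?] _; case/andP: hsigt => ? _; lra. Qed.

Lemma region_gap : 0 < 2 - tau - theta - sigt.
Proof.
case/andP: hsigt => sigt0 _; case: hreg => /andP[tau_gt tau_lt] [_ reg].
rewrite ltNge; apply/negP => gap_le0.
have : (1 - tau ^+ 2) * (2 - tau - theta - sigt) <= 0 by rewrite pmulr_rle0 //; nra.
have : 0 <= (1 - theta) ^+ 2 * (1 - tau - sigt) by rewrite mulr_ge0 ?sqr_ge0 //; lra.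
lra.
Qed.

Lemma region_lt_sq : 4 * (1 - tau - sigt) ^+ 2 <
  (3 - 3 * tau - 2 * sigt) * (4 - tau - theta - 2 * sigt).
Proof.
have gap := region_gap; case/andP: hsigt => sigt0 _.
case: hreg => /andP[tau_gt tau_lt] [T0 reg].
have [c_ge0 | c_lt0] := lerP 0 (2 + tau - theta); first nra.
have W_gt0 : 0 < (1 - tau) * (2 - tau - theta - sigt) by rewrite mulr_gt0 //; lra.
have : (1 - tau - sigt) * (theta - 1) < (1 - tau) * (2 - tau - theta - sigt) by nra.
nra.
Qed.

Lemma vartheta_gt0 : 0 < vartheta sigt tau theta.
Proof.
have a0 : 0 <= 2 * (1 - tau - sigt) by case: hreg => /andP[_ ?] _; lra.
rewrite /vartheta subr_gt0 -(ger0_norm a0) -sqrtr_sqr ltr_sqrt.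
  by rewrite exprMn; have := region_lt_sq; lra.
by have := region_lt_sq; have := sqr_ge0 (1 - tau - sigt); lra.
Qed.

Lemma vartheta_addK :
  (vartheta sigt tau theta + 2 * (1 - tau - sigt)) ^+ 2 =
  (3 - 3 * tau - 2 * sigt) * (4 - tau - theta - 2 * sigt).
Proof.
rewrite /vartheta subrK sqr_sqrtr //.
by have := region_lt_sq; have := sqr_ge0 (1 - tau - sigt); lra.
Qed.

Lemma kappa_ge1 : 1 <= kappa.
Proof.
have := vartheta_gt0; case: hreg => /andP[? _] _ vt0.
by rewrite /kappa ler_pdivlMr // mul1r; lra.
Qed.

Lemma kappa_discriminant_ge0 :
  0 <= kappa ^+ 2 * ((4 - (tau + theta) - 2 * sigt) * (3 - 3 * tau - 2 * sigt))
       - (2 * kappa * (1 - tau - sigt) + (1 + tau)) ^+ 2.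
Proof.
have := vartheta_gt0; have := vartheta_addK; rewrite /kappa.
case: hreg => /andP[tau_gt tau_lt] _.
move: (vartheta sigt tau theta) => vt vt_sq vt0.
(* As [kappa * vt = 1 + tau + vt], the difference of squares factors as
   [vt * (kappa * (vt + 4 (1 - tau - sigt)) + 1 + tau)]. *)
have -> : ((1 + tau + vt) / vt) ^+ 2 * ((4 - (tau + theta) - 2 * sigt) * (3 - 3 * tau - 2 * sigt))
    - (2 * ((1 + tau + vt) / vt) * (1 - tau - sigt) + (1 + tau)) ^+ 2
    = (vt + (1 + tau)) * (vt + 4 * (1 - tau - sigt)) + (1 + tau) * vt.
  have -> : (4 - (tau + theta) - 2 * sigt) * (3 - 3 * tau - 2 * sigt)
      = (vt + 2 * (1 - tau - sigt)) ^+ 2 by rewrite vt_sq; ring.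
  by field; rewrite gt_eqF.
by apply: addr_ge0; apply: mulr_ge0; lra.
Qed.

End ParameterRegion.

Ltac positivity :=
  repeat first [ done | by apply: ltW | exact: ler0n | apply: addr_ge0 | apply: mulr_ge0
               | rewrite invr_ge0 | apply: exprn_ge0 ].

Lemma le_of_subr_eq {R : numDomainType} (l r d : R) : r - l = d -> 0 <= d -> l <= r.
Proof. by move=> <-; rewrite subr_ge0. Qed.

Lemma ge0_eq {R : numDomainType} (a b : R) : a = b -> 0 <= a -> 0 <= b.
Proof. by move->. Qed.

Section DescentCertificates.
Context {R : realType}.
Variables (beta sigt sigh tau theta sigma : R).

Local Notation c1 := ((tau - tau * theta + theta) * beta / (tau + theta)).
Local Notation c2 := (tau / (tau + theta)).
Local Notation c3 := (1 / ((tau + theta) * beta)).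

Lemma descent_scalar_first (vt ex ex' qq ww qw dy d0 : R) :
  0 < beta -> 0 <= sigh -> sigh <= sigma -> -1 < tau -> 0 < tau + theta -> 0 < vt ->
  0 <= phi sigt tau theta sigma -> 0 <= phihat sigt tau theta sigma ->
  0 <= ex' -> 0 <= dy -> 0 <= ww ->
  ex <= sigt / beta * (qq + 2 * qw + ww) + sigh * ex' ->
  beta * dy - 2 * (1 + tau) * qw <= 4 * ((1 + tau + vt) / vt) * beta * d0 ->
  ex + c3 * ((1 - (tau + theta)) ^+ 2 * qq + 2 * (1 - (tau + theta)) * (1 - tau) * qw
             + (1 - tau) ^+ 2 * ww)
  + (phitilde sigt tau theta sigma / ((tau + theta) * beta) * qq
     + phi sigt tau theta sigma / ((tau + theta) * (1 + tau)) * dy)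
  <= sigma * (ex' + dy + c1 * (ww / beta ^+ 2) - 2 * c2 * ((qw + ww) / beta)
              + c3 * (qq + 2 * qw + ww))
  + 4 * (1 + tau + vt) * phi sigt tau theta sigma / ((tau + theta) * (1 + tau) * vt) * d0.
Proof.
move=> hbeta hsigh hsig htau hT vt0 hphi hphihat ex'0 dy0 ww0 crit bound.
have [b0 T0 s0 vt0'] : [/\ beta != 0, tau + theta != 0, 1 + tau != 0 & vt != 0].
  by split; rewrite gt_eqF //; lra.
set slack_crit := sigt / beta * (qq + 2 * qw + ww) + sigh * ex' - ex.
set slack_bound := 4 * ((1 + tau + vt) / vt) * beta * d0 - (beta * dy - 2 * (1 + tau) * qw).
apply: (le_of_subr_eq (d := ((tau + theta) * beta * slack_crit
    + (tau + theta) * beta * (sigma - sigh) * ex' + sigma * (tau + theta) * beta * dy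
    + phihat sigt tau theta sigma * ww
    + phi sigt tau theta sigma / (1 + tau) * slack_bound) / ((tau + theta) * beta))).
  rewrite /slack_crit /slack_bound /phitilde /phihat /phi.
  by field; rewrite b0 T0 s0 vt0'.
have : 0 <= slack_crit by rewrite subr_ge0.
have : 0 <= slack_bound by rewrite subr_ge0.
have [? ? ?] : [/\ 0 <= sigma, 0 <= sigma - sigh & 0 <= 1 + tau] by split; lra.
clearbody slack_crit slack_bound => ? ?; positivity.
Qed.

Lemma descent_scalar_next (ex ex' qq ww qw pp pw dy dy' hdy : R) :
  0 < beta -> 0 <= sigh -> sigh <= sigma -> -1 < tau -> 0 < tau + theta ->
  0 <= phi sigt tau theta sigma -> 0 < phitilde sigt tau theta sigma ->
  0 <= phibar sigt tau theta sigma ->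
  0 <= ex' -> 0 <= dy ->
  (forall s t, 0 <= s ^+ 2 * pp + 2 * s * t * pw + t ^+ 2 * ww) ->
  ex <= sigt / beta * (qq + 2 * qw + ww) + sigh * ex' ->
  0 <= ((1 + tau) * qw + tau * ww - (1 - theta) * pw) / beta - dy + hdy ->
  2 * hdy <= dy' + dy ->
  ex + c3 * ((1 - (tau + theta)) ^+ 2 * qq + 2 * (1 - (tau + theta)) * (1 - tau) * qw
             + (1 - tau) ^+ 2 * ww)
  + (phitilde sigt tau theta sigma / ((tau + theta) * beta) * qq
     + phi sigt tau theta sigma / ((tau + theta) * (1 + tau)) * dy)
  <= sigma * (ex' + dy + c1 * (ww / beta ^+ 2) - 2 * c2 * ((qw + ww) / beta)
              + c3 * (qq + 2 * qw + ww))
  + (phitilde sigt tau theta sigma / ((tau + theta) * beta) * pp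
     + phi sigt tau theta sigma / ((tau + theta) * (1 + tau)) * dy').
Proof.
move=> hbeta hsigh hsig htau hT hphi hphitilde hphibar ex'0 dy0 gram crit mono hdy_le.
have [b0 T0 s0 pht0] : [/\ beta != 0, tau + theta != 0, 1 + tau != 0
                         & phitilde sigt tau theta sigma != 0].
  by split; rewrite gt_eqF //; lra.
have ww0 : 0 <= ww by have := gram 0 1; rewrite !expr0n !expr1n /=; lra.
set lam := 2 * phi sigt tau theta sigma / (1 + tau).
set slack_crit := sigt / beta * (qq + 2 * qw + ww) + sigh * ex' - ex.
set slack_mono := ((1 + tau) * qw + tau * ww - (1 - theta) * pw) / beta - dy + hdy.
set gram_sq := phitilde sigt tau theta sigma ^+ 2 * pp
  + 2 * phitilde sigt tau theta sigma * (lam * (1 - theta) / 2) * pw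
  + (lam * (1 - theta) / 2) ^+ 2 * ww.
(* [gram_sq] is [||phitilde * q_(k-1) + lam (1 - theta) / 2 * w_k||^2]. *)
apply: (le_of_subr_eq (d := ((tau + theta) * beta * slack_crit
    + (tau + theta) * beta * (sigma - sigh) * ex' + sigma * (tau + theta) * beta * dy
    + lam * (beta * slack_mono + beta / 2 * (dy + dy' - 2 * hdy))
    + gram_sq / phitilde sigt tau theta sigma
    + phibar sigt tau theta sigma / ((1 + tau) ^+ 2 * phitilde sigt tau theta sigma) * ww)
    / ((tau + theta) * beta))).
  move: pht0; rewrite /gram_sq /slack_crit /slack_mono /lam /phibar /phihat /phitilde /phi.
  by move=> pht0; field; rewrite b0 T0 pht0 s0.
have : 0 <= gram_sq by apply: gram.
have : 0 <= slack_crit by rewrite subr_ge0.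
have [? ? ?] : [/\ 0 <= sigma, 0 <= sigma - sigh & 0 <= 1 + tau] by split; lra.
have : 0 <= lam by rewrite /lam; positivity.
have : 0 <= dy + dy' - 2 * hdy by lra.
have : 0 <= slack_mono by [].
clearbody lam slack_crit gram_sq slack_mono => ? ? ? ? ?; positivity.
Qed.

Lemma first_step_scalar_bound (kappa gx ex0 ex1 ex ex' dy ey0 hdy qq ww qw gg bb gq gw gb qb wb : R) :
  0 < beta -> 0 <= sigh -> sigh < 1 -> tau < 1 -> 0 < tau + theta -> 1 <= kappa ->
  0 < 4 - (tau + theta) - 2 * sigt ->
  0 <= kappa ^+ 2 * ((4 - (tau + theta) - 2 * sigt) * (3 - 3 * tau - 2 * sigt))
       - (2 * kappa * (1 - tau - sigt) + (1 + tau)) ^+ 2 ->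
  0 <= ex0 -> 0 <= ex1 -> 0 <= ex' -> 0 <= dy ->
  (forall s t, 0 <= s ^+ 2 * qq + 2 * s * t * qw + t ^+ 2 * ww) ->
  0 <= ey0 + hdy + dy / 4 ->
  0 <= gg + tau ^+ 2 * bb + (tau + theta) ^+ 2 / 4 * qq - 2 * tau * gb
        + (tau + theta) * gq - tau * (tau + theta) * qb ->
  0 <= bb + wb + ww / 4 ->
  ex <= sigt / beta * (qq + 2 * qw + ww) + sigh * ex' ->
  2 * gx = ex - ex' + ex0 - ex1 ->
  0 <= gx - (gq + gw + gb + qq + 2 * qw + qb + ww + wb) / beta ->
  0 <= (gw + gb + (1 + tau) * (qw + qb) + tau * (ww + wb)) / beta - dy - hdy ->
  beta * dy - 2 * (1 + tau) * qw <=
  4 * kappa * beta * (ex0 + ey0 + c1 * (bb / beta ^+ 2) - 2 * c2 * (gb / beta) + c3 * gg).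
Proof.
move=> hbeta hsigh hsigh1 htau hT kappa1 u0 discr ex00 ex10 ex'0 dy0 gram sq_y sq_g sq_b
  crit three_point mono_f mono_g.
have [b0 T0 k0 u0'] : [/\ beta != 0, tau + theta != 0, kappa != 0
                        & 4 - (tau + theta) - 2 * sigt != 0].
  by split; rewrite gt_eqF //; lra.
set u := 4 - (tau + theta) - 2 * sigt.
set a := 1 - tau - sigt.
set slack_crit := sigt / beta * (qq + 2 * qw + ww) + sigh * ex' - ex.
set gram_sq := (kappa * u) ^+ 2 * qq + 2 * (kappa * u) * (2 * kappa * a + (1 + tau)) * qw
           + (2 * kappa * a + (1 + tau)) ^+ 2 * ww.
have ww0 : 0 <= ww by have := gram 0 1; rewrite !expr0n !expr1n /=; lra.
have gx_eq : gx = (ex - ex' + ex0 - ex1) / 2 by rewrite -three_point; field.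
apply: (le_of_subr_eq (d :=
  2 * kappa * (2 * beta * (gx - (gq + gw + gb + qq + 2 * qw + qb + ww + wb) / beta)
    + 2 * beta * ((gw + gb + (1 + tau) * (qw + qb) + tau * (ww + wb)) / beta - dy - hdy)
    + beta * slack_crit + beta * (1 - sigh) * ex' + beta * ex1)
  + 2 * kappa * beta * ex0 + (3 * kappa - 1) * beta * dy + 4 * kappa * beta * (ey0 + hdy + dy / 4)
  + 4 * kappa / (tau + theta) * (gg + tau ^+ 2 * bb + (tau + theta) ^+ 2 / 4 * qq - 2 * tau * gb
        + (tau + theta) * gq - tau * (tau + theta) * qb)
  + 4 * kappa * (1 - tau) * (bb + wb + ww / 4)
  + (gram_sq + (kappa ^+ 2 * (u * (3 - 3 * tau - 2 * sigt)) - (2 * kappa * a + (1 + tau)) ^+ 2)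
     * ww) / (kappa * u))).
  move: u0'; rewrite /gram_sq /slack_crit gx_eq /u /a => u0'.
  by field; rewrite b0 T0 k0 u0'.
have : 0 <= gram_sq by apply: gram.
have : 0 <= slack_crit by rewrite subr_ge0.
have [? ? ? ?] : [/\ 0 <= 3 * kappa - 1, 0 <= 1 - sigh, 0 <= 1 - tau & 0 <= kappa] by split; lra.
have : 0 < u := u0.
have : 0 <= kappa ^+ 2 * (u * (3 - 3 * tau - 2 * sigt)) - (2 * kappa * a + (1 + tau)) ^+ 2
  := discr.
set disc := kappa ^+ 2 * (u * _) - _.
clearbody gram_sq slack_crit disc u a => ? ? ? ?; positivity.
Qed.

End DescentCertificates.

Section BlockNorm.
Context {R : realType} {n p m : nat}.
Variables (B : 'M[R]_(m, p)) (G : 'M[R]_n) (H : 'M[R]_p) (beta tau theta : R).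

Lemma zvecB (a a' : 'cV[R]_n) (d d' : 'cV[R]_p) (c c' : 'cV[R]_m) :
  zvec a d c - zvec a' d' c' = zvec (a - a') (d - d') (c - c').
Proof. by rewrite /zvec !opp_col_mx !add_col_mx. Qed.

Lemma qnorm2_Mmat a d c :
  qnorm2 (Mmat B G H beta tau theta) (zvec a d c) =
  qnorm2 G a + qnorm2 H d
  + (tau - tau * theta + theta) * beta / (tau + theta) * sqn (B *m d)
  - 2 * (tau / (tau + theta)) * dotv (B *m d) c
  + 1 / ((tau + theta) * beta) * sqn c.
Proof.
rewrite /qnorm2 /Mmat /zvec !mul_block_col mul_col_mx mul_row_col.
rewrite !mul0mx !addr0 !add0r add_col_mx !dotv_col_mx addr0.
rewrite mulmxDl dotvDl -!scalemxAl !dotvDl !dotvZl mul1mx -mulmxA !dotv_trmxl.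
by rewrite /sqn (dotvC c (B *m d)); ring.
Qed.

End BlockNorm.

Section InexactSymmetricADMM.
Context {R : realType} {n p m : nat}.
Variables (f : 'cV[R]_n -> \bar R) (g : 'cV[R]_p -> \bar R)
  (A : 'M[R]_(m, n)) (B : 'M[R]_(m, p)) (b : 'cV[R]_m)
  (beta sigt sigh tau theta : R) (G : 'M[R]_n) (H : 'M[R]_p)
  (x : nat -> 'cV[R]_n) (y : nat -> 'cV[R]_p) (gam : nat -> 'cV[R]_m)
  (xt : nat -> 'cV[R]_n) (u : nat -> 'cV[R]_n) (gt : nat -> 'cV[R]_m)
  (gh : nat -> 'cV[R]_m).
Hypothesis halg : isp_admm f g A B b beta sigt sigh tau theta G H x y gam xt u gt gh.

Definition resid k := - beta *: (A *m xt k + B *m y k - b).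
Definition ystep k := beta *: (B *m (y k - y k.-1)).

Local Notation M := (Mmat B G H beta tau theta).

Lemma B_ystep k : beta != 0 -> B *m (y k - y k.-1) = beta^-1 *: ystep k.
Proof. by move=> beta0; rewrite /ystep scalerA mulVf ?scale1r. Qed.

Section Iteration.
Variable k : nat.
Hypothesis hk : (1 <= k)%N.

Lemma gt_sub_gam_prev : gt k - gam k.-1 = resid k + ystep k.
Proof.
by case/halg: hk => -> _ _ _ _; rewrite /resid /ystep mulmxBr; colvec_ring.
Qed.

Lemma gt_sub_gam :
  gt k - gam k = (1 - (tau + theta)) *: resid k + (1 - tau) *: ystep k.
Proof.
by case/halg: hk => -> _ _ -> [_ _ ->]; rewrite /resid /ystep mulmxBr; colvec_ring.
Qed.

Lemma gh_add_resid : gh k + resid k = gam k.-1 + (1 + tau) *: resid k + tau *: ystep k.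
Proof.
by case/halg: hk => _ _ _ -> _; rewrite /resid /ystep mulmxBr; colvec_ring.
Qed.

Lemma gam_gh_resid : gam k = gh k + theta *: resid k.
Proof.
by case/halg: hk => _ _ _ _ [_ _ ->]; rewrite /resid; colvec_ring.
Qed.

Lemma xt_sub_x : xt k - x k = xt k - x k.-1 + invmx G *m u k.
Proof. by case/halg: hk => _ _ _ _ [_ -> _]; rewrite opprB addrA addrAC. Qed.

Lemma mulmx_x_step : G \in unitmx -> G *m (x k.-1 - x k) = u k.
Proof.
move=> unitG; case/halg: hk => _ _ _ _ [_ -> _].
by rewrite opprB addrC subrK mulmxA mulmxV // mul1mx.
Qed.

Lemma inexact_criterion : qnorm2 G (xt k - x k) <=
  sigt / beta * sqn (resid k + ystep k) + sigh * qnorm2 G (xt k - x k.-1).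
Proof. by case/halg: (hk) => _ _ + _ _; rewrite -xt_sub_x gt_sub_gam_prev. Qed.

Lemma y_subdiff : proper_fun g -> convex_fun g -> psd H -> 0 <= beta ->
  subdiff g (y k) (B^T *m (gh k + resid k) - H *m (y k - y k.-1)).
Proof.
move=> g_proper g_convex psdH beta0; case/halg: hk => _ _ _ _ [ymin _ _].
by have := prox_subproblem_subdiff g_proper g_convex psdH beta0 ymin; rewrite /resid scaleNr.
Qed.

Lemma Mnorm_zt_sub_z :
  qnorm2 M (zvec (xt k) (y k) (gt k) - zvec (x k) (y k) (gam k)) =
  qnorm2 G (xt k - x k) + 1 / ((tau + theta) * beta) *
    ((1 - (tau + theta)) ^+ 2 * sqn (resid k)
     + 2 * (1 - (tau + theta)) * (1 - tau) * dotv (resid k) (ystep k)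
     + (1 - tau) ^+ 2 * sqn (ystep k)).
Proof.
rewrite zvecB subrr qnorm2_Mmat qnorm20 mulmx0 dotv0l gt_sub_gam sqn_lincomb.
by rewrite /sqn dotv0l; ring.
Qed.

Lemma Mnorm_zt_sub_zprev : beta != 0 ->
  qnorm2 M (zvec (xt k) (y k) (gt k) - zvec (x k.-1) (y k.-1) (gam k.-1)) =
  qnorm2 G (xt k - x k.-1) + qnorm2 H (y k - y k.-1)
  + (tau - tau * theta + theta) * beta / (tau + theta) * (sqn (ystep k) / beta ^+ 2)
  - 2 * (tau / (tau + theta)) * ((dotv (resid k) (ystep k) + sqn (ystep k)) / beta)
  + 1 / ((tau + theta) * beta)
    * (sqn (resid k) + 2 * dotv (resid k) (ystep k) + sqn (ystep k)).
Proof.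
move=> beta0; rewrite zvecB qnorm2_Mmat gt_sub_gam_prev sqnD B_ystep //.
by rewrite sqnZ exprVn dotvZl dotvDr (dotvC (ystep k)) /sqn; ring.
Qed.

End Iteration.

Lemma ystep_monotone k : (2 <= k)%N ->
  proper_fun g -> convex_fun g -> psd H -> 0 < beta ->
  0 <= ((1 + tau) * dotv (resid k) (ystep k) + tau * sqn (ystep k)
        - (1 - theta) * dotv (resid k.-1) (ystep k)) / beta
       - qnorm2 H (y k - y k.-1) + dotv (H *m (y k.-1 - y k.-1.-1)) (y k - y k.-1).
Proof.
move=> hk2 g_proper g_convex psdH beta0.
have hk1 : (1 <= k.-1)%N by case: k hk2 => [|[|]].
have hk : (1 <= k)%N by apply: leq_trans hk2.
have := subdiff_monotone (y_subdiff hk g_proper g_convex psdH (ltW beta0))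
                         (y_subdiff hk1 g_proper g_convex psdH (ltW beta0)).
rewrite !dotvBl !dotv_trmxl B_ystep ?gt_eqF // gh_add_resid // (gam_gh_resid hk1).
apply: ge0_eq; rewrite /resid /ystep /qnorm2 /sqn !dotvDl !dotvZl !dotvZr.
by field; rewrite gt_eqF.
Qed.

Section FirstStep.
Variables (xs : 'cV[R]_n) (ys : 'cV[R]_p) (gs : 'cV[R]_m).
Hypothesis hsol : lagr_sol f g A B b xs ys gs.
Hypothesis beta0 : beta != 0.

Local Notation dgam := (gam 0 - gs).
Local Notation dyB := (beta *: (B *m (y 0 - ys))).

Lemma A_xt_sub_sol :
  A *m (xt 1 - xs) = - (beta^-1 *: (resid 1 + ystep 1 + dyB)).
Proof.
case: hsol => _ [_ /matrixP feas]; rewrite /resid /ystep !mulmxBr.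
move: (A *m xt 1) (A *m xs) (B *m y 1) (B *m y 0) (B *m ys) feas => P Ps Q1 Q0 Qs feas.
apply/matrixP => i j; have := feas i j; rewrite !mxE => feas_ij.
have -> : Ps i j = b i j - Qs i j by lra.
by field.
Qed.

Lemma B_y1_sub_sol : B *m (y 1 - ys) = beta^-1 *: (ystep 1 + dyB).
Proof.
rewrite /ystep -scalerDr scalerA mulVf // scale1r -mulmxDr.
by congr (B *m _); colvec_ring.
Qed.

Lemma first_step_f_monotone : G \in unitmx ->
  0 <= dotv (G *m (x 0 - x 1)) (xt 1 - xs)
       - (dotv dgam (resid 1) + dotv dgam (ystep 1) + dotv dgam dyB + sqn (resid 1)
          + 2 * dotv (resid 1) (ystep 1) + dotv (resid 1) dyB + sqn (ystep 1)
          + dotv (ystep 1) dyB) / beta.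
Proof.
move=> unitG; case: hsol => f_sol _; case/halg: (leqnn 1) => _ f_xt _ _ _.
move: (subdiff_monotone f_xt f_sol) => mono.
rewrite -addrA -mulmxBr dotvDl dotv_trmxl A_xt_sub_sol -(mulmx_x_step (leqnn 1) unitG) /= in mono.
have gt_sub_sol : gt 1 - gs = dgam + (resid 1 + ystep 1).
  by rewrite -gt_sub_gam_prev //; colvec_ring.
move: mono; rewrite gt_sub_sol.
move: (resid 1) (ystep 1) dyB dgam => q w bb dg; apply: ge0_eq.
by rewrite /sqn dotvNr !dotvDl !dotvZr !dotvDr (dotvC w q); field.
Qed.

Lemma first_step_g_monotone : proper_fun g -> convex_fun g -> psd H -> 0 < beta ->
  0 <= (dotv dgam (ystep 1) + dotv dgam dyB + (1 + tau) * (dotv (resid 1) (ystep 1)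
        + dotv (resid 1) dyB) + tau * (sqn (ystep 1) + dotv (ystep 1) dyB)) / beta
       - qnorm2 H (y 1 - y 0) - dotv (H *m (y 1 - y 0)) (y 0 - ys).
Proof.
move=> g_proper g_convex psdH beta_gt0; case: hsol => _ [g_sol _].
have := subdiff_monotone (y_subdiff (leqnn 1) g_proper g_convex psdH (ltW beta_gt0)) g_sol.
move=> /= mono.
rewrite [_ - B^T *m gs]addrAC -mulmxBr dotvBl dotv_trmxl B_y1_sub_sol in mono.
have gh_sub_sol : gh 1 + resid 1 - gs = dgam + (1 + tau) *: resid 1 + tau *: ystep 1.
  by rewrite gh_add_resid //; colvec_ring.
have y_sub_sol : y 1 - ys = (y 1 - y 0) + (y 0 - ys) by colvec_ring.
move: mono; rewrite gh_sub_sol y_sub_sol dotvDr.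
move: (resid 1) (ystep 1) dyB dgam => q w bb dg; apply: ge0_eq.
by rewrite /qnorm2 /sqn !dotvDl !dotvZl !dotvZr !dotvDr; field.
Qed.

Lemma Mnorm_sol_sub_z0 :
  qnorm2 M (zvec xs ys gs - zvec (x 0) (y 0) (gam 0)) =
  qnorm2 G (x 0 - xs) + qnorm2 H (y 0 - ys)
  + (tau - tau * theta + theta) * beta / (tau + theta) * (sqn dyB / beta ^+ 2)
  - 2 * (tau / (tau + theta)) * (dotv dgam dyB / beta)
  + 1 / ((tau + theta) * beta) * sqn dgam.
Proof.
rewrite zvecB qnorm2_Mmat.
have -> : B *m (ys - y 0) = - (beta^-1 *: dyB).
  by rewrite scalerA mulVf // scale1r -mulmxN opprB.
rewrite -(opprB (x 0)) -(opprB (y 0)) -(opprB (gam 0)) !qnorm2N sqnN sqnN.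
by rewrite (sqnZ beta^-1) exprVn dotvNl dotvNr opprK dotvZl dotvC; ring.
Qed.

Lemma first_step_bound_at : 0 <= sigt < 1 -> 0 <= sigh < 1 -> param_region sigt tau theta ->
  0 < beta -> posdef G -> psd H -> proper_fun g -> convex_fun g ->
  beta * qnorm2 H (y 1 - y 0) - 2 * (1 + tau) * dotv (resid 1) (ystep 1) <=
  4 * ((1 + tau + vartheta sigt tau theta) / vartheta sigt tau theta) * beta
    * qnorm2 M (zvec xs ys gs - zvec (x 0) (y 0) (gam 0)).
Proof.
move=> hsigt /andP[sigh0 sigh1] hreg beta_gt0 posG psdH g_proper g_convex.
have [symG G_ge0] := posdef_psd posG; have [symH H_ge0] := psdH.
have gap := region_gap hsigt hreg; have [_ [T_gt0 _]] := hreg.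
have crit := inexact_criterion (leqnn 1); rewrite sqnD /= in crit.
have three_point := qnorm2_three_point symG (x 0 - xs) (x 1 - xs) (xt 1 - xs).
have e1 : (x 0 - xs) - (x 1 - xs) = x 0 - x 1 by colvec_ring.
have e2 : (xt 1 - xs) - (x 1 - xs) = xt 1 - x 1 by colvec_ring.
have e3 : (xt 1 - xs) - (x 0 - xs) = xt 1 - x 0 by colvec_ring.
rewrite e1 e2 e3 in three_point.
have sq_y := H_ge0 ((y 0 - ys) + (1 / 2) *: (y 1 - y 0)).
rewrite qnorm2_lincomb // dotv_sym // in sq_y.
have sq_g := sqn_ge0 (dgam + (- tau) *: dyB + ((tau + theta) / 2) *: resid 1).
have sq_b := sqn_ge0 (dyB + (1 / 2) *: ystep 1).
rewrite sqn_lincomb3 (dotvC dyB (resid 1)) in sq_g.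
rewrite sqnD (sqnZ (1 / 2) (ystep 1)) (dotvZr (1 / 2) dyB) (dotvC dyB) in sq_b.
rewrite Mnorm_sol_sub_z0.
apply: (first_step_scalar_bound _ _ _ _ _ (kappa_ge1 hsigt hreg) _
  (kappa_discriminant_ge0 hsigt hreg) (G_ge0 _) (G_ge0 _) (G_ge0 _) (H_ge0 _) _ _ _ _ crit
  three_point (first_step_f_monotone (posdef_unitmx posG))
  (first_step_g_monotone g_proper g_convex psdH beta_gt0)) => //.
- exact: (region_tau_lt1 hsigt hreg).
- by case/andP: hsigt => ? ?; lra.
- by move=> s t; rewrite -sqn_lincomb sqn_ge0.
- by move: sq_y; congr (0 <= _); field.
- by move: sq_g; congr (0 <= _); rewrite /sqn; field.
- by move: sq_b; congr (0 <= _); rewrite /sqn; field.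
Qed.

End FirstStep.

Lemma first_step_bound : (exists xs ys gs, lagr_sol f g A B b xs ys gs) ->
  0 <= sigt < 1 -> 0 <= sigh < 1 -> param_region sigt tau theta ->
  0 < beta -> posdef G -> psd H -> proper_fun g -> convex_fun g ->
  beta * qnorm2 H (y 1 - y 0) - 2 * (1 + tau) * dotv (resid 1) (ystep 1) <=
  4 * ((1 + tau + vartheta sigt tau theta) / vartheta sigt tau theta) * beta
    * dist0 f g A B b G H beta tau theta (zvec (x 0) (y 0) (gam 0)).
Proof.
move=> [xs [ys [gs sol]]] hsigt hsigh hreg beta_gt0 posG psdH g_proper g_convex.
have c_gt0 : 0 < 4 * ((1 + tau + vartheta sigt tau theta) / vartheta sigt tau theta) * beta.
  have := kappa_ge1 hsigt hreg => kappa1.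
  by apply: mulr_gt0 => //; apply: mulr_gt0; lra.
rewrite -ler_pdivrMl //; apply: lb_le_inf.
  by exists (qnorm2 M (zvec xs ys gs - zvec (x 0) (y 0) (gam 0))), xs, ys, gs.
move=> _ [xs' [ys' [gs' [sol' ->]]]]; rewrite ler_pdivrMl //.
exact: first_step_bound_at sol' (lt0r_neq0 beta_gt0) hsigt hsigh hreg beta_gt0 posG psdH
  g_proper g_convex.
Qed.

Lemma descent_first (sigma : R) : (exists xs ys gs, lagr_sol f g A B b xs ys gs) ->
  0 < beta -> 0 <= sigt < 1 -> 0 <= sigh < 1 -> param_region sigt tau theta ->
  posdef G -> psd H -> proper_fun g -> convex_fun g -> sigh <= sigma ->
  0 <= phi sigt tau theta sigma -> 0 <= phihat sigt tau theta sigma ->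
  qnorm2 M (zvec (xt 1) (y 1) (gt 1) - zvec (x 1) (y 1) (gam 1))
  + (phitilde sigt tau theta sigma / ((tau + theta) * beta) * sqn (resid 1)
     + phi sigt tau theta sigma / ((tau + theta) * (1 + tau)) * qnorm2 H (y 1 - y 0))
  <= sigma * qnorm2 M (zvec (xt 1) (y 1) (gt 1) - zvec (x 0) (y 0) (gam 0))
  + 4 * (1 + tau + vartheta sigt tau theta) * phi sigt tau theta sigma
      / ((tau + theta) * (1 + tau) * vartheta sigt tau theta)
      * dist0 f g A B b G H beta tau theta (zvec (x 0) (y 0) (gam 0)).
Proof.
move=> hsol beta_gt0 hsigt hsigh hreg posG psdH g_proper g_convex hsig hphi hphihat.
have [/andP[tau_gt _] [T_gt0 _]] := hreg.
have crit := inexact_criterion (leqnn 1); rewrite sqnD in crit.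
rewrite Mnorm_zt_sub_z // (Mnorm_zt_sub_zprev (leqnn 1)) ?gt_eqF //.
apply: (descent_scalar_first beta_gt0 _ hsig tau_gt T_gt0 (vartheta_gt0 hsigt hreg) hphi hphihat
  ((posdef_psd posG).2 _) (psdH.2 _) (sqn_ge0 _) crit
  (first_step_bound hsol hsigt hsigh hreg beta_gt0 posG psdH g_proper g_convex)).
by case/andP: hsigh.
Qed.

Lemma descent_next (sigma : R) k : (2 <= k)%N ->
  0 < beta -> 0 <= sigh -> param_region sigt tau theta ->
  posdef G -> psd H -> proper_fun g -> convex_fun g -> sigh <= sigma ->
  0 <= phi sigt tau theta sigma -> 0 < phitilde sigt tau theta sigma ->
  0 <= phibar sigt tau theta sigma ->
  qnorm2 M (zvec (xt k) (y k) (gt k) - zvec (x k) (y k) (gam k))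
  + (phitilde sigt tau theta sigma / ((tau + theta) * beta) * sqn (resid k)
     + phi sigt tau theta sigma / ((tau + theta) * (1 + tau)) * qnorm2 H (y k - y k.-1))
  <= sigma * qnorm2 M (zvec (xt k) (y k) (gt k) - zvec (x k.-1) (y k.-1) (gam k.-1))
  + (phitilde sigt tau theta sigma / ((tau + theta) * beta) * sqn (resid k.-1)
     + phi sigt tau theta sigma / ((tau + theta) * (1 + tau))
       * qnorm2 H (y k.-1 - y k.-1.-1)).
Proof.
move=> hk2 beta_gt0 sigh0 hreg posG psdH g_proper g_convex hsig hphi hphitilde hphibar.
have [/andP[tau_gt _] [T_gt0 _]] := hreg.
have hk : (1 <= k)%N by apply: leq_trans hk2.
have crit := inexact_criterion hk; rewrite sqnD in crit.
rewrite Mnorm_zt_sub_z // Mnorm_zt_sub_zprev ?gt_eqF //.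
apply: (descent_scalar_next beta_gt0 sigh0 hsig tau_gt T_gt0 hphi hphitilde hphibar
  ((posdef_psd posG).2 _) (psdH.2 _) _ crit
  (ystep_monotone hk2 g_proper g_convex psdH beta_gt0) (psd_dotv_le _ _ psdH)).
by move=> s t; rewrite -sqn_lincomb sqn_ge0.
Qed.

End InexactSymmetricADMM.

Theorem theorem2p9 (R : realType) (n p m : nat)
  (f : 'cV[R]_n -> \bar R) (g : 'cV[R]_p -> \bar R)
  (A : 'M[R]_(m, n)) (B : 'M[R]_(m, p)) (b : 'cV[R]_m)
  (hf : proper_fun f /\ closed_fun f /\ convex_fun f)
  (hg : proper_fun g /\ closed_fun g /\ convex_fun g)
  (hsol : exists xs ys gs, lagr_sol f g A B b xs ys gs)
  (beta sigt sigh tau theta : R) (G : 'M[R]_n) (H : 'M[R]_p)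
  (hbeta : 0 < beta) (hsigt : 0 <= sigt < 1) (hsigh : 0 <= sigh < 1)
  (hG : posdef G) (hH : psd H) (hreg : param_region sigt tau theta)
  (x : nat -> 'cV[R]_n) (y : nat -> 'cV[R]_p) (gam : nat -> 'cV[R]_m)
  (xt : nat -> 'cV[R]_n) (u : nat -> 'cV[R]_n) (gt : nat -> 'cV[R]_m)
  (gh : nat -> 'cV[R]_m)
  (halg : isp_admm f g A B b beta sigt sigh tau theta G H x y gam xt u gt gh)
  (sigma : R) (hsig : sigh <= sigma < 1)
  (hphi : 0 <= phi sigt tau theta sigma)
  (hphihat : 0 <= phihat sigt tau theta sigma)
  (hphitilde : 0 < phitilde sigt tau theta sigma)
  (hphibar : 0 <= phibar sigt tau theta sigma) :
  let M := Mmat B G H beta tau theta in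
  let z := fun k => zvec (x k) (y k) (gam k) in
  let zt := fun k => zvec (xt k) (y k) (gt k) in
  let q := fun k => - beta *: (A *m xt k + B *m y k - b) in
  let d0 := dist0 f g A B b G H beta tau theta (z 0%N) in
  let vt := vartheta sigt tau theta in
  let eta := fun k : nat =>
    if k == 0%N then
      4 * (1 + tau + vt) * phi sigt tau theta sigma
        / ((tau + theta) * (1 + tau) * vt) * d0
    else
      phitilde sigt tau theta sigma / ((tau + theta) * beta) * sqn (q k)
      + phi sigt tau theta sigma / ((tau + theta) * (1 + tau)) * qnorm2 H (y k - y k.-1) in
  forall k : nat, (1 <= k)%N ->
    qnorm2 M (zt k - z k) + eta k <= sigma * qnorm2 M (zt k - z k.-1) + eta k.-1.
Proof.
move=> M z zt q d0 vt eta [//|[_|k _]]; have [sigh_sigma _] := andP hsig.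
  exact: (descent_first halg hsol hbeta hsigt hsigh hreg hG hH hg.1 hg.2.2 sigh_sigma
    hphi hphihat).
exact: (descent_next halg _ hbeta (proj1 (andP hsigh)) hreg hG hH hg.1 hg.2.2 sigh_sigma
  hphi hphitilde hphibar).
Qed.
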